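(* Let $G$ be a reflexive graph, and suppose that an edge $vv'$ of $G$ avoids a walk $u_0u_1\dots u_t$ ($t\ge1$) in $G$. Then: 1. If neither $\{u_0,u_1,v,v'\}$ nor $\{u_{t-1},u_t,v,v'\}$ induces a $C_4$, then $(u_0,x)\sim(u_t,y)$ for all $x\in\{v,v'\}$ and $y\in\{v,v'\}$. 2. If $\{u_0,u_1,v,v'\}$ induces a $C_4$ and $\{u_{t-1},u_t,v,v'\}$ does not, then $(u_0,x)\sim(u_t,y)$ for every $y\in\{v,v'\}$, where $x$ is the unique vertex of $\{v,v'\}$ with $u_0x\in E(G)$. 3. If both $\{u_0,u_1,v,v'\}$ and $\{u_{t-1},u_t,v,v'\}$ induce a $C_4$, then $(u_0,x)\sim(u_t,y)$, where $x$ is the unique vertex of $\{v,v'\}$ with $u_0x\in E(G)$ and $y$ is the unique vertex of $\{v,v'\}$ with $u_ty\in E(G)$.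
   Context: A graph is reflexive if every vertex carries a loop; its edge set $E(G)$ contains all loops $vv$, and an ''edge'' $uu'$ may be a loop ($u=u'$). A walk $u_0u_1\dots u_t$ ($t\ge 1$) is a sequence of vertices with $u_ju_{j+1}\in E(G)$ for all $j$ (consecutive vertices may coincide); its edges are $u_ju_{j+1}$. $Z(G)$ is the set of ordered pairs $(u,v)$ of distinct vertices of $G$. For $(u,v),(u',v')\in Z(G)$, $(u,v)$ forces $(u',v')$, written $(u,v)\Lambda(u',v')$, if either $u=u'$ and $v=v'$, or $uu'\in E(G)$, $vv'\in E(G)$, $uv'\notin E(G)$ and $vu'\notin E(G)$. We write $(u,v)\sim(u',v')$ ($(u,v)$ implies $(u',v')$) if there are walks $w_1w_2\dots w_m$ and $z_1z_2\dots z_m$ in $G$ with $(w_1,z_1)=(u,v)$, $(w_m,z_m)=(u',v')$ and $(w_j,z_j)\Lambda(w_{j+1},z_{j+1})$ for $j=1,\dots,m-1$; this is an equivalence relation on $Z(G)$. For edges $uu'$, $vv'$ of a reflexive graph $G$ with $\{u,u'\}\cap\{v,v'\}=\emptyset$, $uu'$ avoids $vv'$ if one of the following holds: (i) $u=u'$, $v=v'$, $uv\notin E(G)$; (ii) $u=u'$, $v\ne v'$, $uv\notin E(G)$ and $uv'\notin E(G)$; (iii) $u\ne u'$, $v=v'$, $uv\notin E(G)$ and $u'v\notin E(G)$; (iv) $u\ne u'$, $v\ne v'$, and $\{u,u',v,v'\}$ induces a $2K_2$, a $P_4$, or a $C_4$ in $G$. An edge avoids a walk if it avoids every edge of the walk.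 *)

From mathcomp Require Import all_boot.
Set Implicit Arguments. Unset Strict Implicit. Unset Printing Implicit Defensive.

Definition reflexive_graph (T : finType) (e : rel T) : Prop :=
  (forall x, e x x) /\ (forall x y, e x y = e y x).

Definition forces (T : finType) (e : rel T) (p q : T * T) : Prop :=
  (p.1 = q.1 /\ p.2 = q.2) \/
  (e p.1 q.1 /\ e p.2 q.2 /\ ~~ e p.1 q.2 /\ ~~ e p.2 q.1).

Definition inZ (T : finType) (p : T * T) : Prop := p.1 <> p.2.

(* (u,v) implies (u',v'): there are walks w_1..w_m, z_1..z_m with
   (w_1,z_1) = (u,v), (w_m,z_m) = (u',v') and consecutive pairs forcing.
   The sequence of pairs is (u,v) :: s. *)
Definition impliesZ (T : finType) (e : rel T) (p q : T * T) : Prop :=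
  exists s : seq (T * T),
    [/\ inZ p /\ (forall r, r \in s -> inZ r),
        path e p.1 (map fst s) /\ path e p.2 (map snd s),
        (forall i, i < size s ->
           forces e (nth p (p :: s) i) (nth p s i))
      & last p s = q].

Definition induces_C4 (T : finType) (e : rel T) (S : {set T}) : Prop :=
  exists a b c d, [/\ S = [set a; b; c; d], #|S| = 4,
    [&& e a b, e b c, e c d & e d a] & ~~ e a c && ~~ e b d].

Definition induces_P4 (T : finType) (e : rel T) (S : {set T}) : Prop :=
  exists a b c d, [/\ S = [set a; b; c; d], #|S| = 4,
    [&& e a b, e b c & e c d] & [&& ~~ e a c, ~~ e b d & ~~ e a d]].

Definition induces_2K2 (T : finType) (e : rel T) (S : {set T}) : Prop :=
  exists a b c d, [/\ S = [set a; b; c; d], #|S| = 4,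
    e a b && e c d & [&& ~~ e a c, ~~ e a d, ~~ e b c & ~~ e b d]].

Definition avoids (T : finType) (e : rel T) (u u' v v' : T) : Prop :=
  [/\ u <> v, u <> v', u' <> v & u' <> v'] /\
  [\/ [/\ u = u', v = v' & ~~ e u v],
      [/\ u = u', v <> v', ~~ e u v & ~~ e u v'],
      [/\ u <> u', v = v', ~~ e u v & ~~ e u' v] |
      [/\ u <> u', v <> v' &
         induces_2K2 e [set u; u'; v; v'] \/ induces_P4 e [set u; u'; v; v']
         \/ induces_C4 e [set u; u'; v; v']]].

Definition is_walk (T : finType) (e : rel T) (u : nat -> T) (t : nat) : Prop :=
  0 < t /\ forall j, j < t -> e (u j) (u j.+1).

Definition avoids_walk (T : finType) (e : rel T) (v v' : T)
    (u : nat -> T) (t : nat) : Prop :=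
  forall j, j < t -> avoids e v v' (u j) (u j.+1).

From mathcomp Require Import all_boot.
Set Implicit Arguments. Unset Strict Implicit. Unset Printing Implicit Defensive.

(* An edge aa' that vv' avoids is
   "separated" from vv': a and a' lie outside {v,v'}, and no vertex of either
   edge is adjacent to both ends of the other one.  Call b in {v,v'}
   compatible with a if b is the only possible neighbour of a in {v,v'}, and
   say that X reaches a if X implies (a,b) for every compatible b.  The key
   lemma is that reachability is transported along every separated edge aa':
   either a or a' is adjacent to neither v nor v', and then every pair (a,b)
   implies every pair (a',c); or each of a, a' has exactly one neighbour in
   {v,v'}, these are distinct, and the two compatible pairs force each other.
   In the second situation {a,a',v,v'} induces a C4, so a non-C4 edge always
   gives the first situation.  The three claims follow by transporting
   reachability along the walk (section Walk): the first claim starts from a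
   non-C4 first edge, the other two from the neighbour x of u_0; the first
   two end through a non-C4 last edge, the third at the neighbour y of u_t. *)

Section Implication.
Variables (T : finType) (e : rel T).

Definition stepZ (p q : T * T) : Prop :=
  [/\ inZ q, e p.1 q.1, e p.2 q.2, ~~ e p.1 q.2 & ~~ e p.2 q.1].

Inductive reachZ : T * T -> T * T -> Prop :=
| reachZ_refl p : inZ p -> reachZ p p
| reachZ_cons p q r : inZ p -> stepZ p q -> reachZ q r -> reachZ p r.

Lemma reachZ_step p q : inZ p -> stepZ p q -> reachZ p q.
Proof. by move=> Zp [Zq *]; apply: reachZ_cons (reachZ_refl Zq). Qed.

Lemma reachZ_trans p q r : reachZ p q -> reachZ q r -> reachZ p r.
Proof.
elim=> {p q} [p _ //| p q q' Zp pq _ IH] /IH; exact: reachZ_cons.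
Qed.

Lemma reachZ_impliesZ p q : reachZ p q -> impliesZ e p q.
Proof.
elim=> {p q} [p Zp | p q r Zp [Zq e1 e2 n12 n21] _ [s [[_ Zs] [P1 P2] F <-]]].
  by exists [::].
exists (q :: s); split=> //=.
- by split=> // w; rewrite inE => /predU1P[->|/Zs].
- by rewrite e1 e2.
- case=> [|i] /= lt_i; first by right.
  rewrite ltnS in lt_i.
  have lt_i' : i < size (q :: s) by exact: ltnW.
  by rewrite (set_nth_default q p lt_i) (set_nth_default q p lt_i'); apply: F.
Qed.

End Implication.

Lemma shape_non_neighbour (T : finType) (e : rel T) (S : {set T}) :
  symmetric e ->
  induces_2K2 e S \/ induces_P4 e S \/ induces_C4 e S ->
  forall z, z \in S -> exists2 w, w \in S & ~~ e z w.
Proof.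
move=> e_sym shape z.
case: shape => [|[]] [a [b [c [d [-> _ E N]]]]];
  repeat match goal with H : is_true (_ && _) |- _ => case/andP: H => ? ? end;
  rewrite !inE => /orP[/orP[/orP[]|]|] /eqP->;
  solve [ exists a; rewrite ?inE ?eqxx ?orbT // e_sym //
        | exists b; rewrite ?inE ?eqxx ?orbT // e_sym //
        | exists c; rewrite ?inE ?eqxx ?orbT // e_sym //
        | exists d; rewrite ?inE ?eqxx ?orbT // e_sym // ].
Qed.

Lemma card4 (T : finType) (a b c d : T) :
  a != b -> a != c -> a != d -> b != c -> b != d -> c != d ->
  #|[set a; b; c; d]| = 4.
Proof.
move=> ab ac ad bc bd cd.
rewrite setUC cardsU1 [_ :|: [set c]]setUC cardsU1 cardsU1 cards1 !inE.
rewrite ![c == _]eq_sym ![d == _]eq_sym.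
by rewrite (negbTE cd) (negbTE ad) (negbTE bd) (negbTE ac) (negbTE bc) ab.
Qed.

Section Avoidance.
Variables (T : finType) (e : rel T) (v v' : T).
Hypotheses (e_refl : reflexive e) (e_sym : symmetric e) (e_vv' : e v v').

Local Notation V := [:: v; v'].

Lemma mem_V_cases c : c \in V -> c = v \/ c = v'.
Proof. by rewrite !inE => /orP[]/eqP->; [left | right]. Qed.

Lemma V_adj b c : b \in V -> c \in V -> e b c.
Proof. by move=> /mem_V_cases[]-> /mem_V_cases[]->; rewrite ?e_refl // e_sym. Qed.

Lemma off_inZ a b : a \notin V -> b \in V -> inZ (a, b).
Proof. by move=> aV bV; rewrite /inZ /= => ab; rewrite ab bV in aV. Qed.

Lemma reach_across a a' b c : a \notin V -> a' \notin V -> b \in V -> c \in V ->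
  e a a' -> ~~ e a c -> ~~ e a' b -> reachZ e (a, b) (a', c).
Proof.
move=> aV a'V bV cV aa' nac na'b; apply: reachZ_step; first exact: off_inZ.
by split=> //=; [exact: off_inZ | exact: V_adj | rewrite e_sym].
Qed.

Record separated (a a' : T) : Prop := Separated {
  sep_off : a \notin V;
  sep_off' : a' \notin V;
  sep_a : ~~ (e a v && e a v');
  sep_a' : ~~ (e a' v && e a' v');
  sep_v : ~~ (e a v && e a' v);
  sep_v' : ~~ (e a v' && e a' v') }.

Lemma avoids_separated a a' : e a a' -> avoids e v v' a a' -> separated a a'.
Proof.
move=> aa' [[va va' v'a v'a'] shape].
have off w : v <> w -> v' <> w -> w \notin V.
  by move=> /eqP vw /eqP v'w; rewrite !inE negb_or !(eq_sym w) vw v'w.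
have [off_a off_a'] : a \notin V /\ a' \notin V by split; apply: off.
case: shape => [[E1 E2 nva] | [E1 _ nva nva'] | [_ E2 nva nv'a] | [_ _ shape]].
- by split=> //; rewrite -?E1 -?E2 (e_sym a) (negbTE nva).
- by split=> //; rewrite -?E1 ?(e_sym a) ?(e_sym a') ?(negbTE nva) ?(negbTE nva') ?andbF.
- by split=> //; rewrite -?E2 ?(e_sym a) ?(negbTE nva) ?(negbTE nv'a) ?andbF.
have NN z : z \in [set v; v'; a; a'] ->
    exists2 w, w \in [set v; v'; a; a'] & ~~ e z w /\ ~~ e w z.
  move=> /(shape_non_neighbour e_sym shape)[w Sw nzw].
  by exists w; [|split; rewrite // e_sym].
split=> //; apply/negP => /andP[h1 h2];
  [case: (NN a) | case: (NN a') | case: (NN v) | case: (NN v')];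
  rewrite ?inE ?eqxx ?orbT // => w;
  rewrite !inE => /orP[/orP[/orP[]|]|] /eqP-> [];
  rewrite ?e_refl ?e_vv' ?aa' ?h1 ?h2 //.
Qed.

Definition blind (a : T) : bool := ~~ e a v && ~~ e a v'.

Definition compatible (a b : T) : Prop :=
  b \in V /\ forall c, c \in V -> e a c -> c = b.

Definition reaches (X : T * T) (a : T) : Prop :=
  forall b, compatible a b -> reachZ e X (a, b).

Lemma blind_non_adj a c : blind a -> c \in V -> ~~ e a c.
Proof. by move=> /andP[nav nav'] /mem_V_cases[]->. Qed.

Lemma adj_compatible a b : ~~ (e a v && e a v') -> b \in V -> e a b ->
  compatible a b.
Proof.
move=> one bV ab; split=> // c cV ac.
by case/mem_V_cases: cV ac => -> ac; case/mem_V_cases: bV ab => -> ab //;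
  rewrite ac ab in one.
Qed.

Lemma compatible_exists a : ~~ (e a v && e a v') -> exists b, compatible a b.
Proof.
move=> one; have [av | nav] := boolP (e a v).
  by exists v; apply: adj_compatible; rewrite ?mem_head.
exists v'; split=> [|c /mem_V_cases[]-> //]; first by rewrite !inE eqxx orbT.
by rewrite (negbTE nav).
Qed.

Lemma non_neighbour_exists a : ~~ (e a v && e a v') ->
  exists2 b, b \in V & ~~ e a b.
Proof.
by rewrite negb_and => /orP[]; [exists v | exists v']; rewrite ?inE ?eqxx ?orbT.
Qed.

Lemma blind_shift a b c : a \notin V -> blind a -> b \in V -> c \in V ->
  reachZ e (a, b) (a, c).
Proof. by move=> aV ba bV cV; apply: reach_across => //; apply: blind_non_adj. Qed.

Lemma blind_crossing a a' : e a a' -> separated a a' -> blind a || blind a' ->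
  forall b c, b \in V -> c \in V -> reachZ e (a, b) (a', c).
Proof.
move=> aa' [aV a'V one_a one_a' _ _] /orP[ba | ba'] b c bV cV.
- have [n nV a'n] := non_neighbour_exists one_a'.
  apply: reachZ_trans (blind_shift aV ba bV nV) _.
  by apply: reach_across => //; apply: blind_non_adj.
- have [n nV an] := non_neighbour_exists one_a.
  apply: reachZ_trans (blind_shift a'V ba' nV cV).
  by apply: reach_across => //; apply: blind_non_adj.
Qed.

Lemma crossing a a' : separated a a' -> ~~ blind a -> ~~ blind a' ->
  exists p p', [/\ (p, p') = (v, v') \/ (p, p') = (v', v),
                  e a p, e a' p', ~~ e a p' & ~~ e a' p].
Proof.
move=> [_ _ one_a one_a' one_v one_v']; rewrite /blind !negb_and !negbK.
move: one_a one_a' one_v one_v'.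
case av: (e a v); case av': (e a v'); case a'v: (e a' v); case a'v': (e a' v') => //= *.
- by exists v, v'; rewrite av av' a'v a'v'; split=> //; left.
- by exists v', v; rewrite av av' a'v a'v'; split=> //; right.
Qed.

(* In that situation {a,a',v,v'} induces the C4 a a' p' p. *)
Lemma non_C4_blind a a' : e a a' -> separated a a' ->
  ~ induces_C4 e [set a; a'; v; v'] -> blind a || blind a'.
Proof.
move=> aa' sep noC4; have [//|/norP[na na']] := boolP (blind a || blind a').
case: noC4; have [p [p' [pp' ap a'p' nap' na'p]]] := crossing sep na na'.
have [aV a'V] := (sep_off sep, sep_off' sep).
have ne w b : w \notin V -> b \in V -> w != b by move=> wV bV; apply/eqP/off_inZ.
have aa'_ne : a != a' by apply: contraNneq na'p => <-.
have pp'_ne : p != p' by apply: contraNneq nap' => <-.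
have vv'_ne : v != v' by case: pp' pp'_ne => [[-> ->] | [-> ->]] //; rewrite eq_sym.
have card_S : #|[set a; a'; v; v']| = 4.
  by apply: card4 => //; apply: ne => //; rewrite !inE eqxx ?orbT.
case: pp' ap a'p' nap' na'p => [[-> ->] | [-> ->]] ap a'p' nap' na'p.
- exists a, a', v', v; split=> //; first exact: setUAC.
    by rewrite aa' a'p' (e_sym v') e_vv' (e_sym v) ap.
  by rewrite nap' na'p.
- exists a, a', v, v'; split=> //.
    by rewrite aa' a'p' e_vv' (e_sym v') ap.
  by rewrite nap' na'p.
Qed.

Lemma reaches_self a x : a \notin V -> x \in V -> e a x -> reaches (a, x) a.
Proof.
move=> aV xV ax b [_ b_only]; rewrite -(b_only x xV ax).
exact/reachZ_refl/off_inZ.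
Qed.

Lemma reaches_full X a a' : separated a a' -> reaches X a ->
  (forall b c, b \in V -> c \in V -> reachZ e (a, b) (a', c)) ->
  forall c, c \in V -> reachZ e X (a', c).
Proof.
move=> sep Xa full c cV; have [b compat_b] := compatible_exists (sep_a sep).
exact: reachZ_trans (Xa b compat_b) (full b c compat_b.1 cV).
Qed.

Lemma non_C4_crossing a a' : e a a' -> separated a a' ->
  ~ induces_C4 e [set a; a'; v; v'] ->
  forall b c, b \in V -> c \in V -> reachZ e (a, b) (a', c).
Proof. by move=> aa' sep noC4; apply: blind_crossing (non_C4_blind aa' sep noC4). Qed.

Lemma reaches_step X a a' : e a a' -> separated a a' -> reaches X a -> reaches X a'.
Proof.
move=> aa' sep Xa b' [b'V b'_only].
have [blind_aa' | /norP[na na']] := boolP (blind a || blind a').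
  exact: reaches_full sep Xa (blind_crossing aa' sep blind_aa') b' b'V.
have [p [p' [pp' ap a'p' nap' na'p]]] := crossing sep na na'.
have [pV p'V pp'_cover] :
    [/\ p \in V, p' \in V & forall c, c \in V -> c = p \/ c = p'].
  by case: pp' => [[-> ->] | [-> ->]]; split; rewrite ?inE ?eqxx ?orbT //;
    move=> c /mem_V_cases[]->; by [left | right].
have compat_p : compatible a p.
  by split=> // c /pp'_cover[]-> // ap'; rewrite ap' in nap'.
rewrite -(b'_only p' p'V a'p').
apply: reachZ_trans (Xa p compat_p) _.
exact: reach_across (sep_off sep) (sep_off' sep) pV p'V aa' nap' na'p.
Qed.

Section Walk.
Variables (u : nat -> T) (t : nat).
Hypotheses (t_pos : 0 < t) (walk : forall j, j < t -> e (u j) (u j.+1))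
           (walk_sep : forall j, j < t -> separated (u j) (u j.+1)).

Lemma reaches_walk X i j : i <= j <= t -> reaches X (u i) -> reaches X (u j).
Proof.
elim: j => [|j IH] /andP[ij jt]; first by move: ij; rewrite leqn0 => /eqP->.
move: ij; rewrite leq_eqVlt => /predU1P[-> // | ij] Xi.
by apply: reaches_step (walk jt) (walk_sep jt) (IH _ Xi); rewrite -ltnS ij ltnW.
Qed.

Lemma last_edge : e (u t.-1) (u t) /\ separated (u t.-1) (u t).
Proof.
have lt_last : t.-1 < t by rewrite prednK.
by rewrite -[in u t](prednK t_pos); split; [apply: walk | apply: walk_sep].
Qed.

Lemma walk_non_C4_ends x y : x \in V -> y \in V ->
  ~ induces_C4 e [set u 0; u 1; v; v'] ->
  ~ induces_C4 e [set u t.-1; u t; v; v'] -> reachZ e (u 0, x) (u t, y).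
Proof.
move=> xV yV noC0 noCt.
have first_full := non_C4_crossing (walk t_pos) (walk_sep t_pos) noC0.
have [t1 | t_gt1] := eqVneq t 1; first by rewrite t1; apply: first_full.
have X1 : reaches (u 0, x) (u 1) by move=> b [bV _]; apply: first_full.
have [ll sep_ll] := last_edge.
apply: reaches_full sep_ll (reaches_walk _ X1) (non_C4_crossing ll sep_ll noCt) y yV.
by rewrite leq_pred andbT -ltnS prednK // ltn_neqAle eq_sym t_gt1.
Qed.

Lemma reaches_along x j : x \in V -> e (u 0) x -> j <= t -> reaches (u 0, x) (u j).
Proof.
move=> xV u0x jt; apply: (reaches_walk (i := 0)); first by rewrite jt.
exact: reaches_self (sep_off (walk_sep t_pos)) xV u0x.
Qed.

Lemma walk_non_C4_end x y : x \in V -> e (u 0) x -> y \in V ->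
  ~ induces_C4 e [set u t.-1; u t; v; v'] -> reachZ e (u 0, x) (u t, y).
Proof.
move=> xV u0x yV noCt; have [ll sep_ll] := last_edge.
apply: reaches_full sep_ll _ (non_C4_crossing ll sep_ll noCt) y yV.
exact: reaches_along xV u0x (leq_pred t).
Qed.

Lemma walk_adjacent_ends x y : x \in V -> e (u 0) x -> y \in V -> e (u t) y ->
  reachZ e (u 0, x) (u t, y).
Proof.
move=> xV u0x yV uty; apply: reaches_along xV u0x (leqnn t) _ _.
by apply: adj_compatible (sep_a' (last_edge.2)) yV uty.
Qed.

End Walk.
End Avoidance.

Unset Implicit Arguments.

Theorem lemma5 (T : finType) (e : rel T) (u : nat -> T) (t : nat) (v v' : T) :
  reflexive_graph e -> is_walk e u t -> e v v' -> avoids_walk e v v' u t ->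
  let C0 := induces_C4 e [set u 0; u 1; v; v'] in
  let Ct := induces_C4 e [set u t.-1; u t; v; v'] in
  [/\ (~ C0 -> ~ Ct -> forall x y, x \in [:: v; v'] -> y \in [:: v; v'] ->
         impliesZ e (u 0, x) (u t, y)),
      (C0 -> ~ Ct -> forall x, x \in [:: v; v'] -> e (u 0) x ->
         forall y, y \in [:: v; v'] -> impliesZ e (u 0, x) (u t, y)) &
      (C0 -> Ct -> forall x y, x \in [:: v; v'] -> e (u 0) x ->
         y \in [:: v; v'] -> e (u t) y -> impliesZ e (u 0, x) (u t, y))].
Proof.
move=> [e_refl e_sym] [t_pos walk] e_vv' avoid C0 Ct.
have walk_sep j : j < t -> separated e v v' (u j) (u j.+1).
  by move=> jt; apply: avoids_separated (walk j jt) (avoid j jt).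
split=> [noC0 noCt x y xV yV | _ noCt x xV u0x y yV | _ _ x y xV u0x yV uty];
  apply: reachZ_impliesZ.
- exact: (walk_non_C4_ends e_refl e_sym e_vv' t_pos walk walk_sep xV yV noC0 noCt).
- exact: (walk_non_C4_end e_refl e_sym e_vv' t_pos walk walk_sep xV u0x yV noCt).
- exact: (walk_adjacent_ends e_refl e_sym e_vv' t_pos walk walk_sep xV u0x yV uty).
Qed.
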